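(* If $\mathcal{P}$ and $\mathcal{Q}$ are ranked finite posets, then $\mathcal{M}(\mathcal{P}\times\mathcal{Q},t)=\mathcal{M}(\mathcal{P},t)\,\mathcal{M}(\mathcal{Q},t)$.
   Context: $\mathcal{P}\times\mathcal{Q}$ carries the product order $(x_1,x_2)\le(y_1,y_2)$ iff $x_1\le y_1$ and $x_2\le y_2$, with rank $\mathrm{rk}(x_1,x_2)=\mathrm{rk}(x_1)+\mathrm{rk}(x_2)$. For a finite ranked poset $\mathcal{R}$, $\mathrm{rk}(\mathcal{R})$ is the maximum rank of an element and $\rho(x,y,z)=3\,\mathrm{rk}(\mathcal{R})-\mathrm{rk}(x)-\mathrm{rk}(y)-\mathrm{rk}(z)$. Let $\delta_3(x,y,z)=1$ if $x=y=z$ and $0$ otherwise, and $J=J_\mathcal{R}$ the unique integer-valued function on triples $x\le y\le z$ of $\mathcal{R}$ with $\sum_{x\le a\le y\le b\le z}J(a,y,b)=\delta_3(x,y,z)$ for all $x\le y\le z$. Then $\mathcal{M}(\mathcal{R},t)=\sum_{x\le y\le z}J(x,y,z)\,t^{\rho(x,y,z)}$. *)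

From Stdlib Require Import ClassicalEpsilon.
From mathcomp Require Import all_boot all_order all_algebra.
Set Implicit Arguments. Unset Strict Implicit. Unset Printing Implicit Defensive.
Import GRing.Theory Num.Theory.
Local Open Scope ring_scope.

Section Defs.
Variables (T : finType) (le : rel T) (rk : T -> nat).

Definition is_poset : Prop :=
  [/\ reflexive le, antisymmetric le & transitive le].

Definition covers (x y : T) : bool :=
  [&& le x y, x != y & [forall z, (le x z && le z y) ==> ((z == x) || (z == y))]].

Definition ranked_poset : Prop :=
  [/\ is_poset,
      (forall x : T, (forall y, le y x -> y = x) -> rk x = 0%N) &
      (forall x y : T, covers x y -> rk y = (rk x).+1)].

Definition rank_of : nat := (\max_(x : T) rk x)%N.

Definition rho (x y z : T) : nat := (3 * rank_of - rk x - rk y - rk z)%N.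

Definition delta3 (x y z : T) : int := if (x == y) && (y == z) then 1 else 0.

Definition is_J (J : T -> T -> T -> int) : Prop :=
  forall x y z : T, le x y -> le y z ->
    \sum_(a : T | le x a && le a y) \sum_(b : T | le y b && le b z) J a y b
    = delta3 x y z.

Definition J_fun : T -> T -> T -> int :=
  epsilon (inhabits (fun _ _ _ => 0)) is_J.

Definition Mpoly : {poly int} :=
  \sum_(x : T) \sum_(y : T) \sum_(z : T | le x y && le y z)
     J_fun x y z *: 'X^(rho x y z).
End Defs.

Definition prod_le (P Q : finType) (leP : rel P) (leQ : rel Q) : rel (P * Q)%type :=
  fun u v => leP u.1 v.1 && leQ u.2 v.2.

Definition prod_rk (P Q : finType) (rkP : P -> nat) (rkQ : Q -> nat) : (P * Q)%type -> nat :=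
  fun u => (rkP u.1 + rkQ u.2)%N.

(* J is triangular: in the defining identity at x <= y <= z every term other
   than J(x,y,z) lives on a strictly smaller pair of intervals [a,y], [y,b],
   so J is unique.  It exists, being J(a,y,b) = mu(a,y) mu(y,b) for the Moebius
   function mu.  Intervals and delta3 of P x Q factor coordinatewise, so
   (u,v,w) |-> J_P(u1,v1,w1) J_Q(u2,v2,w2) satisfies the defining identity of
   P x Q and is therefore J_{PxQ}.  Since rk(P x Q) = rk(P) + rk(Q), rho is
   additive as well, and the triple sum defining M(P x Q, t) factors. *)

From Stdlib Require Import ClassicalEpsilon.
From mathcomp Require Import all_boot all_algebra.
From mathcomp Require Import zify.
Set Implicit Arguments. Unset Strict Implicit. Unset Printing Implicit Defensive.
Import GRing.Theory.
Local Open Scope ring_scope.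

Section Poset.
Variables (T : finType) (R : rel T).
Hypothesis R_poset : is_poset R.

Lemma poset_refl x : R x x.
Proof. by case: R_poset. Qed.

Lemma poset_anti x y : R x y -> R y x -> x = y.
Proof. by case: R_poset => _ anti _ Rxy Ryx; apply: anti; rewrite Rxy Ryx. Qed.

Lemma poset_trans x y z : R x y -> R y z -> R x z.
Proof. by case: R_poset => _ _ trans Rxy; apply: trans. Qed.

Lemma is_poset_dual : is_poset [rel x y | R y x].
Proof.
split=> [x | x y /andP[Ryx Rxy] | x y z Ryx Rzy] /=.
- exact: poset_refl.
- exact: poset_anti.
- exact: poset_trans Rzy Ryx.
Qed.

Definition interval a b : {set T} := [set c | R a c & R c b].

Lemma interval_subl x a y : R x a -> interval a y \subset interval x y.
Proof.
move=> Rxa; apply/subsetP => c; rewrite !inE => /andP[Rac ->].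
by rewrite (poset_trans Rxa Rac).
Qed.

Lemma interval_subr y b z : R b z -> interval y b \subset interval y z.
Proof.
move=> Rbz; apply/subsetP => c; rewrite !inE => /andP[-> Rcb].
by rewrite (poset_trans Rcb Rbz).
Qed.

Lemma card_interval_ltl x a y :
  R x a -> R a y -> a != x -> (#|interval a y| < #|interval x y|)%N.
Proof.
move=> Rxa Ray neq_ax; apply/proper_card/properP; split; first exact: interval_subl.
exists x; first by rewrite inE poset_refl (poset_trans Rxa Ray).
by rewrite inE; apply: contra neq_ax => /andP[Rax _]; rewrite (poset_anti Rax Rxa).
Qed.

Lemma card_interval_ltr y b z :
  R y b -> R b z -> b != z -> (#|interval y b| < #|interval y z|)%N.
Proof.
move=> Ryb Rbz neq_bz; apply/proper_card/properP; split; first exact: interval_subr.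
exists z; first by rewrite inE poset_refl (poset_trans Ryb Rbz).
by rewrite inE; apply: contra neq_bz => /andP[_ Rzb]; rewrite (poset_anti Rbz Rzb).
Qed.

Fixpoint mobius_rec (n : nat) (x y : T) : int :=
  if n is n'.+1 then
    if x == y then 1 else - \sum_(z | R x z && R z y && (z != y)) mobius_rec n' x z
  else 0.

Lemma mobius_rec_stable n m x y :
  (#|interval x y| < n)%N -> (#|interval x y| < m)%N ->
  mobius_rec n x y = mobius_rec m x y.
Proof.
elim: n m y => [|n IHn] [|m] y //= lt_n lt_m.
case: eqP => // _; congr (- _); apply: eq_bigr => z /andP[/andP[Rxz Rzy] neq_zy].
have lt_zy := card_interval_ltr Rxz Rzy neq_zy.
by apply: IHn; apply: leq_trans lt_zy _; rewrite -ltnS.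
Qed.

Definition mobius (x y : T) : int := mobius_rec #|T|.+1 x y.

Lemma mobius_id x : mobius x x = 1.
Proof. by rewrite /mobius /= eqxx. Qed.

Lemma mobius_neq x y :
  x != y -> mobius x y = - \sum_(z | R x z && R z y && (z != y)) mobius x z.
Proof.
move=> neq_xy; rewrite {1}/mobius /= (negbTE neq_xy); congr (- _).
apply: eq_bigr => z /andP[/andP[Rxz Rzy] neq_zy].
have lt_zy := card_interval_ltr Rxz Rzy neq_zy.
have lt_T : (#|interval x z| < #|T|)%N := leq_trans lt_zy (max_card _).
by apply: mobius_rec_stable => //; apply: ltnW.
Qed.

Lemma sum_mobius x y : R x y -> \sum_(z | R x z && R z y) mobius x z = (x == y)%:R.
Proof.
move=> Rxy; rewrite (bigD1 y) /=; last by rewrite Rxy poset_refl.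
have [<-|neq_xy] := eqVneq x y.
  rewrite mobius_id big1 ?addr0 // => z /andP[/andP[Rxz Rzx]].
  by rewrite (poset_anti Rzx Rxz) eqxx.
by rewrite mobius_neq // addNr.
Qed.

Lemma double_sum_intervalD1 (J : T -> T -> T -> int) x y z : R x y -> R y z ->
  \sum_(a | R x a && R a y) \sum_(b | R y b && R b z) J a y b =
  J x y z + \sum_(b | R y b && R b z && (b != z)) J x y b
          + \sum_(a | R x a && R a y && (a != x)) \sum_(b | R y b && R b z) J a y b.
Proof.
move=> Rxy Ryz; rewrite (bigD1 x) /=; last by rewrite poset_refl Rxy.
by rewrite (bigD1 z) /= ?poset_refl ?Ryz // addrA.
Qed.

Lemma is_J_unique J1 J2 : is_J R J1 -> is_J R J2 ->
  forall x y z, R x y -> R y z -> J1 x y z = J2 x y z.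
Proof.
move=> J1P J2P x y z.
suff: forall n x y z, (#|interval x y| + #|interval y z| < n)%N ->
    R x y -> R y z -> J1 x y z = J2 x y z by apply.
elim=> // n IHn {}x {}y {}z lt_n Rxy Ryz.
have inner : \sum_(b | R y b && R b z && (b != z)) J1 x y b =
             \sum_(b | R y b && R b z && (b != z)) J2 x y b.
  apply: eq_bigr => b /andP[/andP[Ryb Rbz] neq_bz]; apply: IHn => //.
  by have := card_interval_ltr Ryb Rbz neq_bz; lia.
have outer :
    \sum_(a | R x a && R a y && (a != x)) \sum_(b | R y b && R b z) J1 a y b =
    \sum_(a | R x a && R a y && (a != x)) \sum_(b | R y b && R b z) J2 a y b.
  apply: eq_bigr => a /andP[/andP[Rxa Ray] neq_ax].
  apply: eq_bigr => b /andP[Ryb Rbz]; apply: IHn => //.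
  have := card_interval_ltl Rxa Ray neq_ax.
  by have := subset_leq_card (interval_subr y Rbz); lia.
have := J1P x y z Rxy Ryz; rewrite -(J2P x y z Rxy Ryz).
by rewrite !double_sum_intervalD1 // inner outer => /addIr/addIr.
Qed.

End Poset.

(* [mobius [rel u v | R v u] y a] is the Moebius value mu(a, y) of [R]. *)
Lemma is_J_mobius (T : finType) (R : rel T) : is_poset R ->
  is_J R (fun a y b => mobius [rel u v | R v u] y a * mobius R y b).
Proof.
move=> R_poset x y z Rxy Ryz.
under eq_bigr => a _ do rewrite -big_distrr.
rewrite -big_distrl (sum_mobius R_poset Ryz) /=.
rewrite (eq_bigl (fun a => R a y && R x a)) => [|a]; last by rewrite andbC.
rewrite (sum_mobius (is_poset_dual R_poset)) //= /delta3 [y == x]eq_sym.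
by case: (x == y); case: (y == z).
Qed.

Lemma is_J_J_fun (T : finType) (R : rel T) : is_poset R -> is_J R (J_fun R).
Proof. by move=> R_poset; exact: epsilon_spec (ex_intro _ _ (is_J_mobius R_poset)). Qed.

Lemma sum_pair_mul_cond (R : pzSemiRingType) (P Q : finType) (p : pred P) (q : pred Q)
    (F : P -> R) (G : Q -> R) :
  \sum_(u : P * Q | p u.1 && q u.2) F u.1 * G u.2 =
  (\sum_(x | p x) F x) * (\sum_(y | q y) G y).
Proof. by rewrite big_distrlr pair_big. Qed.

Lemma sum_pair_mul (R : pzSemiRingType) (P Q : finType) (F : P -> R) (G : Q -> R) :
  \sum_(u : P * Q) F u.1 * G u.2 = (\sum_x F x) * (\sum_y G y).
Proof. by rewrite big_distrlr pair_big. Qed.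

Lemma sum3_pair_mul (R : pzSemiRingType) (P Q : finType)
    (F : P -> P -> P -> R) (G : Q -> Q -> Q -> R) :
  \sum_(u : P * Q) \sum_(v : P * Q) \sum_(w : P * Q) F u.1 v.1 w.1 * G u.2 v.2 w.2 =
  (\sum_x \sum_y \sum_z F x y z) * (\sum_x \sum_y \sum_z G x y z).
Proof.
rewrite -sum_pair_mul; apply: eq_bigr => u _.
rewrite -sum_pair_mul; apply: eq_bigr => v _.
exact: sum_pair_mul.
Qed.

Lemma delta3_prod (P Q : finType) (x y z : P * Q) :
  delta3 x y z = delta3 x.1 y.1 z.1 * delta3 x.2 y.2 z.2.
Proof.
case: x y z => [x1 x2] [y1 y2] [z1 z2]; rewrite /delta3 !xpair_eqE andbACA /=.
by case: ((x1 == y1) && (y1 == z1)); case: ((x2 == y2) && (y2 == z2)).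
Qed.

Section ProductPoset.
Variables (P Q : finType) (leP : rel P) (leQ : rel Q).

Lemma prod_le_interval x a y :
  prod_le leP leQ x a && prod_le leP leQ a y =
  (leP x.1 a.1 && leP a.1 y.1) && (leQ x.2 a.2 && leQ a.2 y.2).
Proof. exact: andbACA. Qed.

Hypotheses (leP_poset : is_poset leP) (leQ_poset : is_poset leQ).

Lemma is_poset_prod : is_poset (prod_le leP leQ).
Proof.
split=> [u | [u1 u2] [v1 v2] | v u w].
- by rewrite /prod_le (poset_refl leP_poset) (poset_refl leQ_poset).
- rewrite /prod_le /= => /andP[/andP[le_uv1 le_uv2] /andP[le_vu1 le_vu2]].
  by rewrite (poset_anti leP_poset le_uv1 le_vu1) (poset_anti leQ_poset le_uv2 le_vu2).
- move=> /andP[le_uv1 le_uv2] /andP[le_vw1 le_vw2].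
  by rewrite /prod_le (poset_trans leP_poset le_uv1 le_vw1) (poset_trans leQ_poset le_uv2 le_vw2).
Qed.

Lemma is_J_prod : is_J (prod_le leP leQ)
  (fun u v w => J_fun leP u.1 v.1 w.1 * J_fun leQ u.2 v.2 w.2).
Proof.
move=> x y z /andP[le_xy1 le_xy2] /andP[le_yz1 le_yz2].
rewrite (eq_bigl _ _ (prod_le_interval x ^~ y)).
under eq_bigr => a _ do rewrite (eq_bigl _ _ (prod_le_interval y ^~ z))
  (sum_pair_mul_cond (fun b => leP y.1 b && leP b z.1) (fun b => leQ y.2 b && leQ b z.2)).
rewrite (sum_pair_mul_cond (fun a => leP x.1 a && leP a y.1) (fun a => leQ x.2 a && leQ a y.2)
  (fun a => \sum_(b | leP y.1 b && leP b z.1) J_fun leP a y.1 b)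
  (fun a => \sum_(b | leQ y.2 b && leQ b z.2) J_fun leQ a y.2 b)).
by rewrite !is_J_J_fun // delta3_prod.
Qed.

Lemma J_fun_prod u v w : prod_le leP leQ u v -> prod_le leP leQ v w ->
  J_fun (prod_le leP leQ) u v w = J_fun leP u.1 v.1 w.1 * J_fun leQ u.2 v.2 w.2.
Proof. exact: (is_J_unique is_poset_prod (is_J_J_fun is_poset_prod) is_J_prod). Qed.

End ProductPoset.

Lemma rank_of_prod (P Q : finType) (rkP : P -> nat) (rkQ : Q -> nat) (x0 : P) (y0 : Q) :
  rank_of (prod_rk rkP rkQ) = (rank_of rkP + rank_of rkQ)%N.
Proof.
apply/eqP; rewrite eqn_leq; apply/andP; split.
  by apply/bigmax_leqP => u _; rewrite leq_add ?leq_bigmax.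
rewrite /rank_of (bigmax_eq_arg x0) // (bigmax_eq_arg y0) //.
exact: (@leq_bigmax _ (prod_rk rkP rkQ) ([arg max_(i > x0) rkP i], [arg max_(i > y0) rkQ i])).
Qed.

Lemma rho_prod (P Q : finType) (rkP : P -> nat) (rkQ : Q -> nat) (u v w : P * Q) :
  rho (prod_rk rkP rkQ) u v w = (rho rkP u.1 v.1 w.1 + rho rkQ u.2 v.2 w.2)%N.
Proof.
rewrite /rho (rank_of_prod rkP rkQ u.1 u.2) /prod_rk.
have rkP_le x : (rkP x <= rank_of rkP)%N := leq_bigmax x.
have rkQ_le y : (rkQ y <= rank_of rkQ)%N := leq_bigmax y.
move: (rkP_le u.1) (rkP_le v.1) (rkP_le w.1) (rkQ_le u.2) (rkQ_le v.2) (rkQ_le w.2); lia.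
Qed.

Definition Mpoly_term (T : finType) (le : rel T) (rk : T -> nat) (x y z : T) : {poly int} :=
  if le x y && le y z then J_fun le x y z *: 'X^(rho rk x y z) else 0.

Lemma Mpoly_sum_term (T : finType) (le : rel T) (rk : T -> nat) :
  Mpoly le rk = \sum_x \sum_y \sum_z Mpoly_term le rk x y z.
Proof. by apply: eq_bigr => x _; apply: eq_bigr => y _; rewrite big_mkcond. Qed.

Lemma Mpoly_term_prod (P Q : finType) (leP : rel P) (leQ : rel Q)
    (rkP : P -> nat) (rkQ : Q -> nat) (u v w : P * Q) :
  is_poset leP -> is_poset leQ ->
  Mpoly_term (prod_le leP leQ) (prod_rk rkP rkQ) u v w =
  Mpoly_term leP rkP u.1 v.1 w.1 * Mpoly_term leQ rkQ u.2 v.2 w.2.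
Proof.
move=> leP_poset leQ_poset; rewrite /Mpoly_term prod_le_interval.
have [/andP[le_uv1 le_vw1]|] := boolP (leP _ _ && _); last by rewrite mul0r.
have [/andP[le_uv2 le_vw2]|] := boolP (leQ _ _ && _); last by rewrite mulr0.
rewrite J_fun_prod ?rho_prod /prod_le ?le_uv1 ?le_uv2 ?le_vw1 ?le_vw2 //.
by rewrite exprD -scalerAl -scalerAr scalerA.
Qed.

Theorem proposition6p6 (P Q : finType) (leP : rel P) (leQ : rel Q)
    (rkP : P -> nat) (rkQ : Q -> nat) :
  ranked_poset leP rkP -> ranked_poset leQ rkQ ->
  Mpoly (prod_le leP leQ) (prod_rk rkP rkQ) = Mpoly leP rkP * Mpoly leQ rkQ.
Proof.
move=> [leP_poset _ _] [leQ_poset _ _].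
rewrite !Mpoly_sum_term -sum3_pair_mul.
by do 3![apply: eq_bigr => ? _]; apply: Mpoly_term_prod.
Qed.
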